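(* Let $n\ge1$, $N=\{1,\dots,n\}$, $A=(a_{ij})\in[0,1]^{n\times n}$, $b=(b_1,\dots,b_n)$ with $b_i>0$, assume $\check\alpha_j\le1$ for all $j\in N$, and let $\lambda\in[0,+\infty)$. If for every $p=(p_1,\dots,p_n)\in P$ the system $$\begin{cases} x_j=d_{0j}=1 & \text{for all } j\in N^*,\\ d_{(p_j-1)j}\le x_j\le d_{p_jj} & \text{for all } j\in N\setminus N^*,\\ \sum_{j\in N^*}a_{ij}+\sum_{j\in N\setminus N^*}\big[\gamma_{ij}\,x_j+(1-\gamma_{ij})\,a_{ij}\big]\ge b_i & \text{for all } i\in N,\\ \sum_{j\in N^*}a_{ij}+\sum_{j\in N\setminus N^*}\big[\gamma_{ij}\,x_j+(1-\gamma_{ij})\,a_{ij}\big]=\lambda x_i & \text{for all } i\in N\end{cases}$$ has no solution $x\in[0,1]^n$, then $V^*(A,\lambda)=\emptyset$.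
   Context: $\theta=(0,\dots,0)$. For $x\in[0,1]^n$, $(A\odot x^T)_i=\sum_{j\in N}\min\{a_{ij},x_j\}$. $V^*(A,\lambda)=\{x\in[0,1]^n: (A\odot x^T)_i\ge b_i \text{ and } (A\odot x^T)_i=\lambda x_i \text{ for all } i\in N,\ x\neq\theta\}$. $\check\alpha_j=\max\big(\{0\}\cup\{b_i-\sum_{k\in N\setminus\{j\}}a_{ik}: i\in N\}\big)$. $D_j=\{d_{0j}<\dots<d_{l_jj}\}$ is the set $\{\check\alpha_j\}\cup\{a_{ij}: i\in N,\ a_{ij}\ge\check\alpha_j\}\cup\{1\}$ listed increasingly. $N^*=\{j\in N:\check\alpha_j=1\}$; $P_j=\{0\}$ for $j\in N^*$ and $P_j=\{1,\dots,l_j\}$ (indices with $d_{pj}>\check\alpha_j$) for $j\in N\setminus N^*$; $P=P_1\times\dots\times P_n$. For $p\in P$, $i\in N$, $j\in N\setminus N^*$: $\gamma_{ij}=1$ if $d_{p_jj}\le a_{ij}$ and $\gamma_{ij}=0$ if $a_{ij}\le d_{(p_j-1)j}$. *)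

From HB Require Import structures.
From mathcomp Require Import all_boot all_order all_algebra.
From mathcomp Require Import reals.
Set Implicit Arguments. Unset Strict Implicit. Unset Printing Implicit Defensive.
Import Order.TTheory GRing.Theory Num.Theory.
Local Open Scope ring_scope.

Section MaxMin.
Variables (R : realType) (n : nat).
Implicit Types (A : 'M[R]_n) (b x : 'rV[R]_n) (lam : R) (p : 'I_n -> nat).

Definition maxmin A x (i : 'I_n) : R := \sum_(j < n) Num.min (A i j) (x 0 j).

Definition in_Vstar A b lam x : Prop :=
  (forall j, 0 <= x 0 j <= 1) /\
  (forall i, b 0 i <= maxmin A x i /\ maxmin A x i = lam * x 0 i) /\
  x != 0.

Definition alpha_check A b (j : 'I_n) : R :=
  \big[Num.max/0]_(i < n) (b 0 i - \sum_(k < n | k != j) A i k).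

Definition Dseq A b (j : 'I_n) : seq R :=
  sort <=%R (undup (alpha_check A b j :: 1 ::
     [seq A i j | i <- enum 'I_n & alpha_check A b j <= A i j])).

Definition dd A b (k : nat) (j : 'I_n) : R := nth 0 (Dseq A b j) k.

Definition ll A b (j : 'I_n) : nat := (size (Dseq A b j)).-1.

Definition Nstar A b (j : 'I_n) : bool := alpha_check A b j == 1.

Definition inP A b p : Prop :=
  forall j, if Nstar A b j then p j = 0%N else (1 <= p j <= ll A b j)%N.

(* gamma_ij : 1 if d_{p_j j} <= a_ij, 0 otherwise (then a_ij <= d_{(p_j-1)j}) *)
Definition gamma A b p (i j : 'I_n) : R :=
  if dd A b (p j) j <= A i j then 1 else 0.

Definition lhs A b p x (i : 'I_n) : R :=
  \sum_(j < n | Nstar A b j) A i j +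
  \sum_(j < n | ~~ Nstar A b j)
      (gamma A b p i j * x 0 j + (1 - gamma A b p i j) * A i j).

Definition solves_system A b lam p x : Prop :=
  (forall j, 0 <= x 0 j <= 1) /\
  (forall j, Nstar A b j -> x 0 j = dd A b 0 j /\ dd A b 0 j = 1) /\
  (forall j, ~~ Nstar A b j ->
       dd A b (p j).-1 j <= x 0 j <= dd A b (p j) j) /\
  (forall i, b 0 i <= lhs A b p x i) /\
  (forall i, lhs A b p x i = lam * x 0 i).

End MaxMin.

From HB Require Import structures.
From mathcomp Require Import all_boot all_order all_algebra.
From mathcomp Require Import reals.
Import Order.TTheory GRing.Theory Num.Theory.
Local Open Scope ring_scope.

(* Let x be in V*(A, lam). Since b_i <= x_j + sum_(k != j) a_ik for every i,
   x_j >= check-alpha_j, so x_j = 1 when j is in N*, and otherwise x_j lies in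
   some gap [d_(p_j - 1)j, d_(p_j)j] between consecutive points of D_j. As no
   a_ij >= check-alpha_j falls strictly inside that gap, min(a_ij, x_j) is x_j
   when gamma_ij = 1 and a_ij when gamma_ij = 0. Hence the left-hand sides of
   the system for p are exactly (A (.) x^T)_i, and x solves that system. *)

Section SortedBracket.
Context {disp : Order.disp_t} {T : orderType disp}.
Local Open Scope order_scope.

Lemma min_bracket {a y hi : T} :
  y <= hi -> (a < hi -> a <= y) -> Order.min a y = if hi <= a then y else a.
Proof.
move=> y_le_hi gap; case: ifPn => [hi_le_a | ].
  by rewrite min_r // (le_trans y_le_hi hi_le_a).
by rewrite -ltNge => /gap /min_l.
Qed.

Variables (x0 : T) (s : seq T).
Hypothesis s_sorted : sorted <=%O s.

Lemma sorted_nth_le i j :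
  (i <= j)%N -> (j < size s)%N -> nth x0 s i <= nth x0 s j.
Proof.
move=> le_ij lt_js; apply: (sorted_leq_nth le_trans lexx) => //.
by rewrite inE (leq_ltn_trans le_ij lt_js).
Qed.

Lemma sorted_bracket y :
  nth x0 s 0 <= y -> has (>= y) (behead s) ->
  exists k, [/\ (1 <= k <= (size s).-1)%N, nth x0 s k.-1 <= y,
    y <= nth x0 s k & {in s, forall z, z < nth x0 s k -> z <= nth x0 s k.-1}].
Proof.
move=> s0_le_y has_y; set k := find (>= y) (behead s).
have lt_k : (k < (size s).-1)%N by rewrite -size_behead -has_find.
exists k.+1; split => //=.
- case Ek: k => [|k'] //=.
  have /(before_find x0) : (k' < k)%N by rewrite Ek.
  by rewrite nth_behead -Ek => /negbT; rewrite -ltNge => /ltW.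
- by rewrite -nth_behead; exact: (nth_find x0 has_y).
- move=> z z_s; rewrite -(nth_index x0 z_s).
  have lt_zs : (index z s < size s)%N by rewrite index_mem.
  have [le_zk | lt_kz] := leqP (index z s) k.
    move=> _; apply: sorted_nth_le => //.
    exact: leq_trans lt_k (leq_pred _).
  by rewrite ltNge sorted_nth_le.
Qed.

End SortedBracket.

Section VstarSolvesSystem.
Context {R : realType} {n : nat} {A : 'M[R]_n} {b : 'rV[R]_n}.
Hypothesis A01 : forall i j, 0 <= A i j <= 1.
Hypothesis alpha_check_le1 : forall j, alpha_check A b j <= 1.

Lemma alpha_check_le (x : 'rV[R]_n) j :
  0 <= x 0 j -> (forall i, b 0 i <= maxmin A x i) -> alpha_check A b j <= x 0 j.
Proof.
move=> x_ge0 b_le; apply: (big_ind (fun y => y <= x 0 j)) => // [u v|i _].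
  by rewrite ge_max => -> ->.
rewrite lerBlDr (le_trans (b_le i)) // /maxmin (bigD1 j) //=.
by rewrite lerD ?ge_min ?lexx ?orbT // ler_sum // => k _; rewrite ge_min lexx.
Qed.

Lemma Dseq_sorted j : sorted <=%R (Dseq A b j).
Proof. exact/sort_sorted/le_total. Qed.

Lemma alpha_check_in_Dseq j : alpha_check A b j \in Dseq A b j.
Proof. by rewrite mem_sort mem_undup inE eqxx. Qed.

Lemma one_in_Dseq j : 1 \in Dseq A b j.
Proof. by rewrite mem_sort mem_undup !inE eqxx orbT. Qed.

Lemma entry_in_Dseq {i j} : alpha_check A b j <= A i j -> A i j \in Dseq A b j.
Proof.
move=> alpha_le; rewrite mem_sort mem_undup !inE; apply/or3P/Or33.
by apply: map_f; rewrite mem_filter alpha_le mem_enum.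
Qed.

Lemma mem_Dseq {j y} : y \in Dseq A b j -> alpha_check A b j <= y <= 1.
Proof.
rewrite mem_sort mem_undup !inE.
case/or3P => [/eqP-> | /eqP-> | /mapP[i]]; rewrite ?lexx ?alpha_check_le1 //.
rewrite mem_filter => /andP[alpha_le _] ->.
by rewrite alpha_le; case/andP: (A01 i j).
Qed.

Lemma dd0 j : dd A b 0 j = alpha_check A b j.
Proof.
have Dj_gt0 : (0 < size (Dseq A b j))%N.
  by case: (Dseq A b j) (alpha_check_in_Dseq j).
apply/le_anti; rewrite (andP (mem_Dseq (mem_nth 0 Dj_gt0))).1 andbT.
rewrite /dd -[leRHS](nth_index 0 (alpha_check_in_Dseq j)).
by apply: sorted_nth_le; rewrite ?Dseq_sorted ?index_mem ?alpha_check_in_Dseq.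
Qed.

Lemma Dseq_bracket j y :
  ~~ Nstar A b j -> alpha_check A b j <= y <= 1 ->
  exists k, [/\ (1 <= k <= ll A b j)%N, dd A b k.-1 j <= y, y <= dd A b k j &
    forall i, A i j < dd A b k j -> A i j <= y].
Proof.
move=> notNj /andP[alpha_le_y y_le1].
have has_y : has (>= y) (behead (Dseq A b j)).
  apply/hasP; exists 1 => //; move: (one_in_Dseq j) (dd0 j) notNj.
  rewrite /dd /Nstar; case: (Dseq A b j) => [|d0 ds] //=.
  by rewrite inE => /orP[/eqP<- <-|//]; rewrite eqxx.
have [|k [k_range lo_le_y y_le_hi gap]] :=
  sorted_bracket 0 _ (Dseq_sorted j) y _ has_y.
  by rewrite -/(dd A b 0 j) dd0.
exists k; split=> // i lt_hi.
have [alpha_le_a | a_lt_alpha] := leP (alpha_check A b j) (A i j).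
  exact: le_trans (gap _ (entry_in_Dseq alpha_le_a) lt_hi) lo_le_y.
exact: ltW (lt_le_trans a_lt_alpha alpha_le_y).
Qed.

Lemma lhs_eq_maxmin p (x : 'rV[R]_n) :
  (forall j, Nstar A b j -> x 0 j = 1) ->
  (forall j, ~~ Nstar A b j -> x 0 j <= dd A b (p j) j /\
     forall i, A i j < dd A b (p j) j -> A i j <= x 0 j) ->
  forall i, lhs A b p x i = maxmin A x i.
Proof.
move=> x_Nstar x_bracket i; rewrite /lhs /maxmin [RHS](bigID (Nstar A b)) /=.
congr (_ + _); apply: eq_bigr => j Nj.
  by rewrite x_Nstar // min_l //; case/andP: (A01 i j).
have [x_le_hi gap] := x_bracket j Nj.
rewrite (min_bracket x_le_hi (gap i)) /gamma.
by case: ifP => _; rewrite ?(mul1r, mul0r, subrr, subr0, addr0, add0r).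
Qed.

Lemma in_Vstar_solves_system {lam : R} {x : 'rV[R]_n} :
  in_Vstar A b lam x -> exists p, inP A b p /\ solves_system A b lam p x.
Proof.
move=> [x01 [x_sys _]].
have alpha_le_x j : alpha_check A b j <= x 0 j.
  by apply: alpha_check_le => [|i]; [case/andP: (x01 j) | case: (x_sys i)].
have x_Nstar j : Nstar A b j -> x 0 j = 1.
  move=> /eqP alpha1; apply/le_anti.
  by rewrite (andP (x01 j)).2 -alpha1 alpha_le_x.
have bracket_ex j : exists k, if Nstar A b j then k = 0%N else
    [/\ (1 <= k <= ll A b j)%N, dd A b k.-1 j <= x 0 j, x 0 j <= dd A b k j &
        forall i, A i j < dd A b k j -> A i j <= x 0 j].
  case: (boolP (Nstar A b j)) => [_ | notNj]; first by exists 0%N.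
  by apply: Dseq_bracket; rewrite // alpha_le_x (andP (x01 j)).2.
have [p p_spec] := fin_all_exists bracket_ex.
have lhsE i : lhs A b p x i = maxmin A x i.
  apply: lhs_eq_maxmin => // j /negbTE notNj.
  by move: (p_spec j); rewrite notNj => -[].
exists p; split=> [j | ].
  by move: (p_spec j); case: ifP => // _ [].
split; last split; last split; last split.
- exact: x01.
- by move=> j Nj; rewrite x_Nstar // dd0 (eqP Nj).
- move=> j /negbTE notNj.
  by move: (p_spec j); rewrite notNj => -[_ -> ->].
- by move=> i; rewrite lhsE; case: (x_sys i).
- by move=> i; rewrite lhsE; case: (x_sys i).
Qed.

End VstarSolvesSystem.

Theorem theorem4p2 (R : realType) (n : nat) (A : 'M[R]_n) (b : 'rV[R]_n)
  (lam : R) :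
  (0 < n)%N ->
  (forall i j, 0 <= A i j <= 1) ->
  (forall i, 0 < b 0 i) ->
  (forall j, alpha_check A b j <= 1) ->
  0 <= lam ->
  (forall p : 'I_n -> nat, inP A b p ->
     ~ exists x : 'rV[R]_n, solves_system A b lam p x) ->
  forall x : 'rV[R]_n, ~ in_Vstar A b lam x.
Proof.
move=> _ A01 _ alpha_check_le1 _ no_solution x x_Vstar.
have [p [p_in_P x_solves]] :=
  in_Vstar_solves_system A01 alpha_check_le1 x_Vstar.
exact: no_solution p p_in_P (ex_intro _ x x_solves).
Qed.
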